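(* Consider the following schemata and rule over QHC: (D$_\nabla$) $\nabla\alpha\lor\neg\nabla\alpha$ for all problems $\alpha$ (decidability of all problems of the form $\nabla\alpha$); (WEM) $\neg\alpha\lor\neg\neg\alpha$ for all problems $\alpha$; (D$_{\rm prop}$) $!p\lor !\neg p$ for all propositions $p$ (decidability of all propositions); the Exclusive Disjunction Rule (EDR): from $\neg(\alpha\land\beta)$ infer $\nabla(\alpha\lor\beta)\to\nabla\alpha\lor\nabla\beta$, for all problems $\alpha,\beta$. Then, over QHC: (a) (D$_\nabla$) implies (WEM); (b) (WEM) implies that (EDR) is derivable; (c) (D$_\nabla$) is equivalent to the conjunction of Hilbert's No Ignorabimus Principle and (EDR); (d) (D$_{\rm prop}$) is equivalent to the conjunction of Kolmogorov's Stability Principle and (EDR).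
   Context: QHC is a two-sorted first-order calculus. Its only terms are individual variables. Every formula is either a problem (denoted by Greek letters $\alpha,\beta,\gamma,\dots$) or a proposition (denoted by Latin letters $p,q,\dots$). Atomic formulas are proposition variables $p(t_1,\dots,t_n)$ (of proposition type), problem variables $\pi(t_1,\dots,t_n)$ (of problem type), and the constants $0$ (a proposition, classical falsity) and $\bot$ (a problem, intuitionistic absurdity). Propositions are closed under the classical connectives $\land,\lor,\to$ and quantifiers $\exists,\forall$; problems are closed under the intuitionistic connectives $\land,\lor,\to$ and quantifiers $\exists,\forall$ (the same symbols are used, distinguished by the type of the arguments). $\neg p$ abbreviates $p\to 0$, $\neg\alpha$ abbreviates $\alpha\to\bot$, and $\leftrightarrow$ is defined as usual. There are two type-conversion operators: if $p$ is a proposition then $!p$ is a problem, and if $\alpha$ is a problem then $?\alpha$ is a proposition. Deductive system of QHC: all axioms and rules of classical predicate logic applied to all propositions; all postulates and rules of intuitionistic predicate logic applied to all problems; the rules $p\,/\,!p$ and $\alpha\,/\,?\alpha$; and the schemas $?!p\to p$; $\alpha\to\, !?\alpha$; $!(p\to q)\to(!p\to !q)$; $?(\alpha\to\beta)\to(?\alpha\to ?\beta)$; $!0\to\bot$; $?(\alpha\land\beta)\leftrightarrow ?\alpha\land ?\beta$; $?(\alpha\lor\beta)\leftrightarrow ?\alpha\lor ?\beta$; $?\bot\to 0$; $?\exists x\,\alpha(x)\leftrightarrow\exists x\,?\alpha(x)$; $?\forall x\,\alpha(x)\to\forall x\,?\alpha(x)$ (usual variable side conditions implicit). $\vdash A$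 means $A$ is derivable in QHC; $A\Rightarrow B$ means $\vdash A\to B$ and $A\Leftrightarrow B$ means $\vdash A\leftrightarrow B$ (with $A,B$ of the same type); $A\vdash B$ means $B$ is derivable in QHC from the premise $A$. Notation: $\Box p := ?!p$ (a proposition) and $\nabla\alpha := !?\alpha$ (a problem). QC and QH denote classical and intuitionistic predicate calculus. Hilbert's No Ignorabimus Principle is the schema $?(\gamma\lor\neg\gamma)$ for all problems $\gamma$. Kolmogorov's Stability Principle is the schema $\neg !\neg p\to !p$ for all propositions $p$. ''Over QHC, X implies Y'' means that after adding X (schema or rule) to QHC, Y (all its instances, resp. the rule) becomes derivable. *)

From Stdlib Require Import List Arith.
Import ListNotations.

(* Individual variables (the only terms) are natural numbers. *)
Definition var := nat.

Inductive prp : Type :=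
  | PVar  : nat -> list var -> prp
  | PZero : prp
  | PAnd  : prp -> prp -> prp
  | POr   : prp -> prp -> prp
  | PImp  : prp -> prp -> prp
  | PEx   : var -> prp -> prp
  | PAll  : var -> prp -> prp
  | PQ    : prb -> prp                   (* ?alpha *)
with prb : Type :=
  | BVar  : nat -> list var -> prb
  | BBot  : prb
  | BAnd  : prb -> prb -> prb
  | BOr   : prb -> prb -> prb
  | BImp  : prb -> prb -> prb
  | BEx   : var -> prb -> prb
  | BAll  : var -> prb -> prb
  | BBang : prp -> prb.                  (* !p *)

Inductive fm : Type :=
  | FP : prp -> fm
  | FB : prb -> fm.

Definition PNeg (p : prp) : prp := PImp p PZero.
Definition BNeg (a : prb) : prb := BImp a BBot.
Definition PIff (p q : prp) : prp := PAnd (PImp p q) (PImp q p).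
Definition BIff (a b : prb) : prb := BAnd (BImp a b) (BImp b a).
Definition Box (p : prp) : prp := PQ (BBang p).
Definition Nab (a : prb) : prb := BBang (PQ a).

Fixpoint freeP (x : var) (p : prp) : Prop :=
  match p with
  | PVar _ l => In x l
  | PZero => False
  | PAnd p q | POr p q | PImp p q => freeP x p \/ freeP x q
  | PEx z p | PAll z p => z <> x /\ freeP x p
  | PQ a => freeB x a
  end
with freeB (x : var) (a : prb) : Prop :=
  match a with
  | BVar _ l => In x l
  | BBot => False
  | BAnd a b | BOr a b | BImp a b => freeB x a \/ freeB x b
  | BEx z a | BAll z a => z <> x /\ freeB x a
  | BBang p => freeP x p
  end.

Definition rn (x y v : var) : var := if Nat.eqb v x then y else v.

Fixpoint substP (x y : var) (p : prp) : prp :=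
  match p with
  | PVar n l => PVar n (map (rn x y) l)
  | PZero => PZero
  | PAnd p q => PAnd (substP x y p) (substP x y q)
  | POr p q => POr (substP x y p) (substP x y q)
  | PImp p q => PImp (substP x y p) (substP x y q)
  | PEx z p => if Nat.eqb z x then PEx z p else PEx z (substP x y p)
  | PAll z p => if Nat.eqb z x then PAll z p else PAll z (substP x y p)
  | PQ a => PQ (substB x y a)
  end
with substB (x y : var) (a : prb) : prb :=
  match a with
  | BVar n l => BVar n (map (rn x y) l)
  | BBot => BBot
  | BAnd a b => BAnd (substB x y a) (substB x y b)
  | BOr a b => BOr (substB x y a) (substB x y b)
  | BImp a b => BImp (substB x y a) (substB x y b)
  | BEx z a => if Nat.eqb z x then BEx z a else BEx z (substB x y a)
  | BAll z a => if Nat.eqb z x then BAll z a else BAll z (substB x y a)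
  | BBang p => BBang (substP x y p)
  end.

(* y is free for (substitutable for) x: no capture. *)
Fixpoint sfP (x y : var) (p : prp) : Prop :=
  match p with
  | PVar _ _ | PZero => True
  | PAnd p q | POr p q | PImp p q => sfP x y p /\ sfP x y q
  | PEx z p | PAll z p => ~ (z <> x /\ freeP x p) \/ (z <> y /\ sfP x y p)
  | PQ a => sfB x y a
  end
with sfB (x y : var) (a : prb) : Prop :=
  match a with
  | BVar _ _ | BBot => True
  | BAnd a b | BOr a b | BImp a b => sfB x y a /\ sfB x y b
  | BEx z a | BAll z a => ~ (z <> x /\ freeB x a) \/ (z <> y /\ sfB x y a)
  | BBang p => sfP x y p
  end.

Inductive QHC_axiom : fm -> Prop :=
  | AP1 p q : QHC_axiom (FP (PImp p (PImp q p)))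
  | AP2 p q r : QHC_axiom (FP (PImp (PImp p (PImp q r)) (PImp (PImp p q) (PImp p r))))
  | AP3 p q : QHC_axiom (FP (PImp (PAnd p q) p))
  | AP4 p q : QHC_axiom (FP (PImp (PAnd p q) q))
  | AP5 p q : QHC_axiom (FP (PImp p (PImp q (PAnd p q))))
  | AP6 p q : QHC_axiom (FP (PImp p (POr p q)))
  | AP7 p q : QHC_axiom (FP (PImp q (POr p q)))
  | AP8 p q r : QHC_axiom (FP (PImp (PImp p r) (PImp (PImp q r) (PImp (POr p q) r))))
  | AP9 p : QHC_axiom (FP (PImp PZero p))
  | APDN p : QHC_axiom (FP (PImp (PNeg (PNeg p)) p))
  | APQ1 x y p : sfP x y p -> QHC_axiom (FP (PImp (PAll x p) (substP x y p)))
  | APQ2 x y p : sfP x y p -> QHC_axiom (FP (PImp (substP x y p) (PEx x p)))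
  | APQ3 x p q : ~ freeP x q -> QHC_axiom (FP (PImp (PAll x (PImp q p)) (PImp q (PAll x p))))
  | APQ4 x p q : ~ freeP x q -> QHC_axiom (FP (PImp (PAll x (PImp p q)) (PImp (PEx x p) q)))
  | AB1 a b : QHC_axiom (FB (BImp a (BImp b a)))
  | AB2 a b c : QHC_axiom (FB (BImp (BImp a (BImp b c)) (BImp (BImp a b) (BImp a c))))
  | AB3 a b : QHC_axiom (FB (BImp (BAnd a b) a))
  | AB4 a b : QHC_axiom (FB (BImp (BAnd a b) b))
  | AB5 a b : QHC_axiom (FB (BImp a (BImp b (BAnd a b))))
  | AB6 a b : QHC_axiom (FB (BImp a (BOr a b)))
  | AB7 a b : QHC_axiom (FB (BImp b (BOr a b)))
  | AB8 a b c : QHC_axiom (FB (BImp (BImp a c) (BImp (BImp b c) (BImp (BOr a b) c))))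
  | AB9 a : QHC_axiom (FB (BImp BBot a))
  | ABQ1 x y a : sfB x y a -> QHC_axiom (FB (BImp (BAll x a) (substB x y a)))
  | ABQ2 x y a : sfB x y a -> QHC_axiom (FB (BImp (substB x y a) (BEx x a)))
  | ABQ3 x a b : ~ freeB x b -> QHC_axiom (FB (BImp (BAll x (BImp b a)) (BImp b (BAll x a))))
  | ABQ4 x a b : ~ freeB x b -> QHC_axiom (FB (BImp (BAll x (BImp a b)) (BImp (BEx x a) b)))
  | AC1 p : QHC_axiom (FP (PImp (PQ (BBang p)) p))
  | AC2 a : QHC_axiom (FB (BImp a (BBang (PQ a))))
  | AC3 p q : QHC_axiom (FB (BImp (BBang (PImp p q)) (BImp (BBang p) (BBang q))))
  | AC4 a b : QHC_axiom (FP (PImp (PQ (BImp a b)) (PImp (PQ a) (PQ b))))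
  | AC5 : QHC_axiom (FB (BImp (BBang PZero) BBot))
  | AC6 a b : QHC_axiom (FP (PIff (PQ (BAnd a b)) (PAnd (PQ a) (PQ b))))
  | AC7 a b : QHC_axiom (FP (PIff (PQ (BOr a b)) (POr (PQ a) (PQ b))))
  | AC8 : QHC_axiom (FP (PImp (PQ BBot) PZero))
  | AC9 x a : QHC_axiom (FP (PIff (PQ (BEx x a)) (PEx x (PQ a))))
  | AC10 x a : QHC_axiom (FP (PImp (PQ (BAll x a)) (PAll x (PQ a)))).

(* Derivability in QHC extended by extra axioms [Ax] and extra unary
   rules [Ru] (Ru f g : from premise f infer g). *)
Inductive Der (Ax : fm -> Prop) (Ru : fm -> fm -> Prop) : fm -> Prop :=
  | DAx f : QHC_axiom f -> Der Ax Ru f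
  | DExtra f : Ax f -> Der Ax Ru f
  | DRule f g : Ru f g -> Der Ax Ru f -> Der Ax Ru g
  | DMPP p q : Der Ax Ru (FP (PImp p q)) -> Der Ax Ru (FP p) -> Der Ax Ru (FP q)
  | DMPB a b : Der Ax Ru (FB (BImp a b)) -> Der Ax Ru (FB a) -> Der Ax Ru (FB b)
  | DGenP x p : Der Ax Ru (FP p) -> Der Ax Ru (FP (PAll x p))
  | DGenB x a : Der Ax Ru (FB a) -> Der Ax Ru (FB (BAll x a))
  | DBang p : Der Ax Ru (FP p) -> Der Ax Ru (FB (BBang p))
  | DQues a : Der Ax Ru (FB a) -> Der Ax Ru (FP (PQ a)).

Definition NoAx : fm -> Prop := fun _ => False.
Definition NoRule : fm -> fm -> Prop := fun _ _ => False.
Definition AxUnion (X Y : fm -> Prop) : fm -> Prop := fun f => X f \/ Y f.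

Definition D_nabla : fm -> Prop :=
  fun f => exists a, f = FB (BOr (Nab a) (BNeg (Nab a))).
Definition WEM : fm -> Prop :=
  fun f => exists a, f = FB (BOr (BNeg a) (BNeg (BNeg a))).
Definition D_prop : fm -> Prop :=
  fun f => exists p, f = FB (BOr (BBang p) (BBang (PNeg p))).
Definition NoIgnorabimus : fm -> Prop :=
  fun f => exists g, f = FP (PQ (BOr g (BNeg g))).
Definition Stability : fm -> Prop :=
  fun f => exists p, f = FB (BImp (BNeg (BBang (PNeg p))) (BBang p)).
Definition EDR : fm -> fm -> Prop :=
  fun f g => exists a b, f = FB (BNeg (BAnd a b)) /\
                         g = FB (BImp (Nab (BOr a b)) (BOr (Nab a) (Nab b))).

Definition schema_derivable (Ax : fm -> Prop) (Ru : fm -> fm -> Prop)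
  (Y : fm -> Prop) : Prop := forall f, Y f -> Der Ax Ru f.

Definition rule_derivable (Ax : fm -> Prop) (Ru : fm -> fm -> Prop)
  (R : fm -> fm -> Prop) : Prop :=
  forall f g, R f g -> Der (fun h => Ax h \/ h = f) Ru g.

From Stdlib Require Import List.
Import ListNotations.

Lemma Der_weaken (Ax Ax' : fm -> Prop) (Ru : fm -> fm -> Prop) (f : fm) :
  (forall h, Ax h -> Ax' h) -> Der Ax Ru f -> Der Ax' Ru f.
Proof.
  intros Hsub Hf; induction Hf.
  - now apply DAx.
  - now apply DExtra, Hsub.
  - eapply DRule; eauto.
  - eapply DMPP; eauto.
  - eapply DMPB; eauto.
  - now apply DGenP.
  - now apply DGenB.
  - now apply DBang.
  - now apply DQues.
Qed.

Lemma axioms_derivable (Ax : fm -> Prop) (Ru : fm -> fm -> Prop) :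
  schema_derivable Ax Ru Ax.
Proof. intros f Hf; now apply DExtra. Qed.

(* A schema derivable over Ax stays derivable once an instance premise is added;
   this is what turns schema facts into rule facts. *)
Lemma schema_derivable_extend (Ax : fm -> Prop) (Ru : fm -> fm -> Prop)
  (Y : fm -> Prop) (f : fm) :
  schema_derivable Ax Ru Y -> schema_derivable (fun h => Ax h \/ h = f) Ru Y.
Proof. intros HY g Hg; apply (Der_weaken Ax); auto. Qed.

Section ProblemDeduction.

Variable Ax : fm -> Prop.
Variable Ru : fm -> fm -> Prop.

Inductive Entails (G : list prb) : prb -> Prop :=
| from_hyp a : In a G -> Entails G a
| from_thm a : Der Ax Ru (FB a) -> Entails G a
| from_mp a b : Entails G (BImp a b) -> Entails G a -> Entails G b.

Arguments from_hyp {G a}.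
Arguments from_thm {G a}.
Arguments from_mp {G a b}.

Local Ltac hyp := apply from_hyp; simpl; tauto.
Local Ltac ax c := apply from_thm, DAx; exact c.

Lemma imp_refl (a : prb) : Der Ax Ru (FB (BImp a a)).
Proof.
  eapply DMPB; [eapply DMPB; [apply DAx, (AB2 a (BImp a a) a) |] |];
    apply DAx, AB1.
Qed.

Lemma deduction (G : list prb) (a b : prb) :
  Entails (a :: G) b -> Entails G (BImp a b).
Proof.
  intro H; induction H as [c Hc | c Hc | c d _ IHcd _ IHc].
  - destruct Hc as [<- | Hc].
    + apply from_thm, imp_refl.
    + eapply from_mp; [ax (AB1 c a) | exact (from_hyp Hc)].
  - eapply from_mp; [ax (AB1 c a) | exact (from_thm Hc)].
  - eapply from_mp; [eapply from_mp; [ax (AB2 a c d) | exact IHcd] | exact IHc].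
Qed.

Lemma closed_derivation (a : prb) : Entails [] a -> Der Ax Ru (FB a).
Proof.
  intro H; induction H as [c [] | c Hc | c d _ IHcd _ IHc];
    [exact Hc | eapply DMPB; eauto].
Qed.

Lemma or_introl (G : list prb) (a b : prb) : Entails G a -> Entails G (BOr a b).
Proof. intro H; eapply from_mp; [ax (AB6 a b) | exact H]. Qed.

Lemma or_intror (G : list prb) (a b : prb) : Entails G b -> Entails G (BOr a b).
Proof. intro H; eapply from_mp; [ax (AB7 a b) | exact H]. Qed.

Lemma or_elim (G : list prb) (a b c : prb) :
  Entails G (BOr a b) -> Entails (a :: G) c -> Entails (b :: G) c -> Entails G c.
Proof.
  intros Hab Ha Hb.
  eapply from_mp; [eapply from_mp; [eapply from_mp; [ax (AB8 a b c) |] |] |];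
    [apply deduction, Ha | apply deduction, Hb | exact Hab].
Qed.

Lemma bot_elim (G : list prb) (a : prb) : Entails G BBot -> Entails G a.
Proof. intro H; eapply from_mp; [ax (AB9 a) | exact H]. Qed.

(* !p and !~p are contradictory: !(p -> 0) -> !p -> !0, and !0 -> bot. *)
Lemma bang_contradiction (G : list prb) (p : prp) :
  Entails G (BBang p) -> Entails G (BBang (PNeg p)) -> Entails G BBot.
Proof.
  intros Hp Hnp; eapply from_mp; [ax AC5 |].
  eapply from_mp; [eapply from_mp; [ax (AC3 p PZero) | exact Hnp] | exact Hp].
Qed.

Lemma nabla_K (a b : prb) :
  Der Ax Ru (FB (BImp (Nab (BImp a b)) (BImp (Nab a) (Nab b)))).
Proof.
  apply closed_derivation, deduction, deduction.
  eapply from_mp; [eapply from_mp; [ax (AC3 (PQ a) (PQ b)) |] | hyp].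
  eapply from_mp; [eapply from_mp; [ax (AC3 (PQ (BImp a b)) (PImp (PQ a) (PQ b))) |] | hyp].
  apply from_thm, DBang, DAx, AC4.
Qed.

Lemma nabla_bot : Der Ax Ru (FB (BImp (Nab BBot) BBot)).
Proof.
  apply closed_derivation, deduction.
  eapply from_mp; [ax AC5 |].
  eapply from_mp; [eapply from_mp; [ax (AC3 (PQ BBot) PZero) |] | hyp].
  apply from_thm, DBang, DAx, AC8.
Qed.

(* nabla !p -> !p, obtained by applying ! to ?!p -> p. *)
Lemma nabla_bang (p : prp) : Der Ax Ru (FB (BImp (Nab (BBang p)) (BBang p))).
Proof.
  apply closed_derivation, deduction.
  eapply from_mp; [eapply from_mp; [ax (AC3 (PQ (BBang p)) p) |] | hyp].
  apply from_thm, DBang, DAx, AC1.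
Qed.

Lemma nabla_unit (G : list prb) (a : prb) : Entails G a -> Entails G (Nab a).
Proof. intro H; eapply from_mp; [ax (AC2 a) | exact H]. Qed.

Lemma nabla_mp (G : list prb) (a b : prb) :
  Entails G (BImp a b) -> Entails G (Nab a) -> Entails G (Nab b).
Proof.
  intros Hab Ha; eapply from_mp; [eapply from_mp; [apply from_thm, nabla_K |] | exact Ha].
  apply nabla_unit, Hab.
Qed.

Lemma nabla_contradiction (G : list prb) (a : prb) :
  Entails G (Nab (BNeg a)) -> Entails G (Nab a) -> Entails G BBot.
Proof.
  intros Hna Ha; eapply from_mp; [apply from_thm, nabla_bot |].
  eapply from_mp; [eapply from_mp; [apply from_thm, nabla_K | exact Hna] | exact Ha].
Qed.

(* (a) core: decidability of nabla ~a yields ~a \/ ~~a, since nabla ~a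
   refutes a and ~nabla ~a refutes ~a. *)
Lemma wem_from_nabla_decidable (a : prb) :
  Der Ax Ru (FB (BOr (Nab (BNeg a)) (BNeg (Nab (BNeg a))))) ->
  Der Ax Ru (FB (BOr (BNeg a) (BNeg (BNeg a)))).
Proof.
  intro Hdec; apply closed_derivation.
  eapply or_elim; [exact (from_thm Hdec) | |].
  - apply or_introl, deduction.
    eapply nabla_contradiction; [hyp | apply nabla_unit; hyp].
  - apply or_intror, deduction.
    eapply from_mp; [| apply nabla_unit; hyp]; hyp.
Qed.

(* (b) core: under WEM, an exclusive disjunction a \/ b is already decided
   by ~a \/ ~~a, and nabla pushes through the resulting implications. *)
Lemma edr_from_wem (a b : prb) :
  (forall c, Der Ax Ru (FB (BOr (BNeg c) (BNeg (BNeg c))))) ->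
  Der Ax Ru (FB (BNeg (BAnd a b))) ->
  Der Ax Ru (FB (BImp (Nab (BOr a b)) (BOr (Nab a) (Nab b)))).
Proof.
  intros Hwem Hexcl; apply closed_derivation, deduction.
  eapply or_elim; [exact (from_thm (Hwem a)) | |].
  - apply or_intror; eapply nabla_mp; [| hyp].
    apply deduction; eapply or_elim; [hyp | | hyp].
    apply bot_elim; eapply from_mp; hyp.
  - apply or_introl; eapply nabla_mp; [| hyp].
    apply deduction; eapply or_elim; [hyp | hyp |].
    apply bot_elim; eapply from_mp; [hyp |].
    apply deduction; eapply from_mp; [exact (from_thm Hexcl) |].
    eapply from_mp; [eapply from_mp; [ax (AB5 a b) | hyp] | hyp].
Qed.

(* (c) core, one direction: ?(nabla g) gives ?g, and ?(~nabla g) gives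
   ?(~g), so ?(nabla g \/ ~nabla g) gives ?(g \/ ~g). *)
Lemma no_ignorabimus_from_nabla_decidable (g : prb) :
  Der Ax Ru (FB (BOr (Nab g) (BNeg (Nab g)))) ->
  Der Ax Ru (FP (PQ (BOr g (BNeg g)))).
Proof.
  intro Hdec.
  assert (Hq : forall c d, Der Ax Ru (FB (BImp c d)) ->
                           Der Ax Ru (FP (PImp (PQ c) (PQ d)))).
  { intros c d Hcd; eapply DMPP; [apply DAx, AC4 | apply DQues, Hcd]. }
  assert (Hnab : Der Ax Ru (FP (PImp (PQ (Nab g)) (PQ (BOr g (BNeg g)))))).
  { eapply DMPP; [eapply DMPP; [apply DAx, (AP2 _ (PQ g) _) |] |].
    - eapply DMPP; [apply DAx, AP1 | apply Hq, DAx, AB6].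
    - apply DAx, (AC1 (PQ g)). }
  assert (Hneg : Der Ax Ru (FP (PImp (PQ (BNeg (Nab g))) (PQ (BOr g (BNeg g)))))).
  { apply Hq, closed_derivation, deduction, or_intror, deduction.
    eapply from_mp; [hyp | apply nabla_unit; hyp]. }
  assert (Hsplit : Der Ax Ru (FP (POr (PQ (Nab g)) (PQ (BNeg (Nab g)))))).
  { eapply DMPP; [eapply DMPP; [apply DAx, AP3 | apply DAx, AC7] | apply DQues, Hdec]. }
  eapply DMPP; [eapply DMPP; [eapply DMPP; [apply DAx, AP8 | exact Hnab] | exact Hneg] |].
  exact Hsplit.
Qed.

(* (c) core, other direction: EDR applied to the exclusive disjunction
   a \/ ~a splits nabla (a \/ ~a), which holds by No Ignorabimus. *)
Lemma nabla_decidable_from_no_ignorabimus (a : prb) :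
  Der Ax Ru (FP (PQ (BOr a (BNeg a)))) ->
  Der Ax Ru (FB (BImp (Nab (BOr a (BNeg a))) (BOr (Nab a) (Nab (BNeg a))))) ->
  Der Ax Ru (FB (BOr (Nab a) (BNeg (Nab a)))).
Proof.
  intros Hni Hsplit; apply closed_derivation.
  eapply or_elim;
    [eapply from_mp; [exact (from_thm Hsplit) | exact (from_thm (DBang _ _ _ Hni))] | |].
  - apply or_introl; hyp.
  - apply or_intror, deduction; eapply nabla_contradiction; hyp.
Qed.

(* (d) core: D_prop gives Stability, since !~p contradicts ~!~p. *)
Lemma stability_from_prop_decidable (p : prp) :
  Der Ax Ru (FB (BOr (BBang p) (BBang (PNeg p)))) ->
  Der Ax Ru (FB (BImp (BNeg (BBang (PNeg p))) (BBang p))).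
Proof.
  intro Hdec; apply closed_derivation, deduction.
  eapply or_elim; [exact (from_thm Hdec) | hyp |].
  apply bot_elim; eapply from_mp; hyp.
Qed.

Lemma nabla_decidable_from_prop_decidable (a : prb) :
  Der Ax Ru (FB (BOr (BBang (PQ a)) (BBang (PNeg (PQ a))))) ->
  Der Ax Ru (FB (BOr (Nab a) (BNeg (Nab a)))).
Proof.
  intro Hdec; apply closed_derivation.
  eapply or_elim; [exact (from_thm Hdec) | apply or_introl; hyp |].
  apply or_intror, deduction; eapply bang_contradiction; hyp.
Qed.

Lemma nabla_from_double_negation (g : prb) :
  Der Ax Ru (FB (BImp (BNeg (BBang (PNeg (PQ g)))) (Nab g))) ->
  Der Ax Ru (FB (BImp (BNeg (BNeg g)) (Nab g))).
Proof.
  intro Hstab; apply closed_derivation, deduction.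
  eapply from_mp; [exact (from_thm Hstab) |].
  apply deduction; eapply from_mp; [hyp |].
  apply deduction; eapply bang_contradiction; [apply nabla_unit; hyp | hyp].
Qed.

(* (d) core, other direction: EDR splits nabla (!p \/ !~p); this disjunction
   is not refutable, so by stability (through the previous lemma) its nabla
   holds, and nabla !q -> !q finishes. *)
Lemma prop_decidable_from_stability (p : prp) :
  (forall q, Der Ax Ru (FB (BImp (BNeg (BBang (PNeg q))) (BBang q)))) ->
  Der Ax Ru (FB (BImp (Nab (BOr (BBang p) (BBang (PNeg p))))
                      (BOr (Nab (BBang p)) (Nab (BBang (PNeg p)))))) ->
  Der Ax Ru (FB (BOr (BBang p) (BBang (PNeg p)))).
Proof.
  intros Hstab Hsplit.
  assert (Hnn : Entails [] (BNeg (BNeg (BOr (BBang p) (BBang (PNeg p)))))).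
  { apply deduction; eapply from_mp; [hyp |].
    apply or_introl; eapply from_mp; [exact (from_thm (Hstab p)) |].
    apply deduction; eapply from_mp; [hyp |].
    apply or_intror; hyp. }
  apply closed_derivation.
  eapply or_elim; [eapply from_mp; [exact (from_thm Hsplit) |] | |].
  - eapply from_mp; [apply from_thm, nabla_from_double_negation, Hstab | exact Hnn].
  - apply or_introl; eapply from_mp; [apply from_thm, nabla_bang | hyp].
  - apply or_intror; eapply from_mp; [apply from_thm, nabla_bang | hyp].
Qed.

Lemma not_and_not (a : prb) : Der Ax Ru (FB (BNeg (BAnd a (BNeg a)))).
Proof.
  apply closed_derivation, deduction.
  eapply from_mp; [eapply from_mp; [ax (AB4 a (BNeg a)) | hyp] |].
  eapply from_mp; [ax (AB3 a (BNeg a)) | hyp].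
Qed.

Lemma not_bang_and_bang_neg (p : prp) :
  Der Ax Ru (FB (BNeg (BAnd (BBang p) (BBang (PNeg p))))).
Proof.
  apply closed_derivation, deduction; eapply bang_contradiction.
  - eapply from_mp; [ax (AB3 (BBang p) (BBang (PNeg p))) | hyp].
  - eapply from_mp; [ax (AB4 (BBang p) (BBang (PNeg p))) | hyp].
Qed.

End ProblemDeduction.

Lemma D_nabla_WEM (Ax : fm -> Prop) (Ru : fm -> fm -> Prop) :
  schema_derivable Ax Ru D_nabla -> schema_derivable Ax Ru WEM.
Proof.
  intros HD f [a ->]; apply wem_from_nabla_decidable, HD; now exists (BNeg a).
Qed.

Lemma WEM_EDR (Ax : fm -> Prop) (Ru : fm -> fm -> Prop) :
  schema_derivable Ax Ru WEM -> rule_derivable Ax Ru EDR.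
Proof.
  intros HW f g [a [b [-> ->]]]; apply edr_from_wem.
  - intro c; apply (schema_derivable_extend _ _ _ _ HW); now exists c.
  - apply DExtra; now right.
Qed.

Lemma D_nabla_NoIgnorabimus (Ax : fm -> Prop) (Ru : fm -> fm -> Prop) :
  schema_derivable Ax Ru D_nabla -> schema_derivable Ax Ru NoIgnorabimus.
Proof.
  intros HD f [g ->]; apply no_ignorabimus_from_nabla_decidable, HD; now exists g.
Qed.

Lemma NoIgnorabimus_EDR_D_nabla (Ax : fm -> Prop) (Ru : fm -> fm -> Prop) :
  (forall f g, EDR f g -> Ru f g) ->
  schema_derivable Ax Ru NoIgnorabimus -> schema_derivable Ax Ru D_nabla.
Proof.
  intros HR HN f [a ->]; apply nabla_decidable_from_no_ignorabimus.
  - apply HN; now exists a.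
  - eapply DRule; [apply HR; now exists a, (BNeg a) | apply not_and_not].
Qed.

Lemma D_prop_Stability (Ax : fm -> Prop) (Ru : fm -> fm -> Prop) :
  schema_derivable Ax Ru D_prop -> schema_derivable Ax Ru Stability.
Proof.
  intros HD f [p ->]; apply stability_from_prop_decidable, HD; now exists p.
Qed.

Lemma D_prop_D_nabla (Ax : fm -> Prop) (Ru : fm -> fm -> Prop) :
  schema_derivable Ax Ru D_prop -> schema_derivable Ax Ru D_nabla.
Proof.
  intros HD f [a ->]; apply nabla_decidable_from_prop_decidable, HD; now exists (PQ a).
Qed.

Lemma Stability_EDR_D_prop (Ax : fm -> Prop) (Ru : fm -> fm -> Prop) :
  (forall f g, EDR f g -> Ru f g) ->
  schema_derivable Ax Ru Stability -> schema_derivable Ax Ru D_prop.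
Proof.
  intros HR HS f [p ->]; apply prop_decidable_from_stability.
  - intro q; apply HS; now exists q.
  - eapply DRule; [apply HR; now exists (BBang p), (BBang (PNeg p)) |].
    apply not_bang_and_bang_neg.
Qed.

Theorem proposition2p29 :
  (* (a) D_nabla implies WEM *)
  schema_derivable D_nabla NoRule WEM /\
  (* (b) WEM implies that EDR is derivable *)
  rule_derivable WEM NoRule EDR /\
  (* (c) D_nabla <-> No Ignorabimus + EDR *)
  (schema_derivable D_nabla NoRule NoIgnorabimus /\
   rule_derivable D_nabla NoRule EDR /\
   schema_derivable NoIgnorabimus EDR D_nabla) /\
  (* (d) D_prop <-> Stability + EDR *)
  (schema_derivable D_prop NoRule Stability /\
   rule_derivable D_prop NoRule EDR /\
   schema_derivable Stability EDR D_prop).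
Proof.
  assert (HEDR : forall f g, EDR f g -> EDR f g) by auto.
  split; [| split; [| split; split]].
  - apply D_nabla_WEM, axioms_derivable.
  - apply WEM_EDR, axioms_derivable.
  - apply D_nabla_NoIgnorabimus, axioms_derivable.
  - split.
    + apply WEM_EDR, D_nabla_WEM, axioms_derivable.
    + apply NoIgnorabimus_EDR_D_nabla, axioms_derivable; exact HEDR.
  - apply D_prop_Stability, axioms_derivable.
  - split.
    + apply WEM_EDR, D_nabla_WEM, D_prop_D_nabla, axioms_derivable.
    + apply Stability_EDR_D_prop, axioms_derivable; exact HEDR.
Qed.
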